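(* Let $A_1$ and $A_2$ be two Jordan-Lie algebras, either both classical or both quantum (see context), and suppose $A_1$ has a Casimir element $C$, i.e. $[C,a]=0$ for all $a\in A_1$. Suppose there is a linear map $\phi: A_1\to A_1\otimes A_2$ which is a Jordan-Lie algebra homomorphism: $$[\phi(a),\phi(b)]=\phi([a,b]),\qquad \phi(a\circ b)=\phi(a)\circ\phi(b)\qquad \forall a,b\in A_1 .$$ Fix an integer $N\ge 2$ and define recursively $\phi^{(2)}=\phi$ and $$\phi^{(i)}=(\phi^{(2)}\otimes \underbrace{id\otimes\cdots\otimes id}_{i-2})\circ\phi^{(i-1)},\qquad i=3,\dots,N,$$ so that $\phi^{(i)}:A_1\to A_1\otimes \underbrace{A_2\otimes\cdots\otimes A_2}_{i-1}$. For $i=2,\dots,N$ set $$C^{(i)}=\phi^{(i)}(C)\otimes\underbrace{1\otimes\cdots\otimes 1}_{N-i}\in A_1\otimes\underbrace{A_2\otimes\cdots\otimes A_2}_{N-1}.$$ Then the elements $C^{(2)},\dots,C^{(N)}$ pairwise commute in $A_1\otimes A_2^{\otimes(N-1)}$, i.e. $[C^{(i)},C^{(j)}]=0$ for all $2\le i,j\le N$. Moreover, $[\phi^{(N)}(a),C^{(i)}]=0$ for all $a\in A_1$ and all $i=2,\dots,N$.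
   Context: A generalized Jordan-Lie algebra is a vector space $\mathcal A$ (with unit $1$) equipped with two bilinear operations $\circ$ and $[\cdot,\cdot]$ with values in $\mathcal A$ such that for all $a,b,c$: $(a\circ b)\circ c=a\circ(b\circ c)$; $[a,b]=-[b,a]$; $[a,[b,c]]+[c,[a,b]]+[b,[c,a]]=0$; and $[a,b\circ c]=b\circ[a,c]+[a,b]\circ c$. A classical Jordan-Lie algebra (CJL) is one in which $\circ$ is commutative (e.g. a Poisson algebra of functions with pointwise product and Poisson bracket); a quantum Jordan-Lie algebra (QJL) is one in which $[a,b]=a\circ b-b\circ a$. For two such algebras $A,B$ (both CJL or both QJL), $A\otimes B$ is again such an algebra with $(a\otimes b)\circ(a'\otimes b')=(a\circ a')\otimes(b\circ b')$ and $[a\otimes b,a'\otimes b']=[a,a']\otimes (b\circ b')+(a'\circ a)\otimes[b,b']$; iterated tensor products are given this structure. Products/brackets of elements are written without subscripts indicating the space. *)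

From HB Require Import structures.
From mathcomp Require Import all_boot all_order all_algebra.
Set Implicit Arguments. Unset Strict Implicit. Unset Printing Implicit Defensive.
Import Order.TTheory GRing.Theory Num.Theory.
Local Open Scope ring_scope.

Section JL.
Variable K : fieldType.

Definition is_linear (U V : lmodType K) (f : U -> V) : Prop :=
  forall (c : K) (u v : U), f (c *: u + v) = c *: f u + f v.

Definition is_bilinear (U V W : lmodType K) (f : U -> V -> W) : Prop :=
  (forall v : V, is_linear (fun u => f u v)) /\ (forall u : U, is_linear (f u)).

Definition JL_algebra (A : lmodType K) (mul br : A -> A -> A) (one : A) : Prop :=
  is_bilinear mul /\ is_bilinear br /\
  (forall a, mul one a = a /\ mul a one = a) /\
  (forall a b c, mul (mul a b) c = mul a (mul b c)) /\
  (forall a b, br a b = - br b a) /\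
  (forall a b c, br a (br b c) + br c (br a b) + br b (br c a) = 0) /\
  (forall a b c, br a (mul b c) = mul b (br a c) + mul (br a b) c).

Definition JL_classical (A : lmodType K) (mul : A -> A -> A) : Prop :=
  forall a b, mul a b = mul b a.

Definition JL_quantum (A : lmodType K) (mul br : A -> A -> A) : Prop :=
  forall a b, br a b = mul a b - mul b a.

Definition is_tensor_product (X Y Z : lmodType K) (tens : X -> Y -> Z) : Prop :=
  is_bilinear tens /\
  forall (U : lmodType K) (f : X -> Y -> U), is_bilinear f ->
    exists g : Z -> U, [/\ is_linear g, (forall x y, g (tens x y) = f x y)
      & forall g' : Z -> U, is_linear g' -> (forall x y, g' (tens x y) = f x y) ->
          forall z, g' z = g z].

(* Iterated tensor products: T n stands for A1 (x) A2 (x) ... (x) A2 (n copies of A2),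
   left-nested: T n.+1 = T n (x) A2 via tens n. *)
Variable T : nat -> lmodType K.
Variable A2 : lmodType K.
Variable tens : forall n, T n -> A2 -> T n.+1.
Variable one2 : A2.

Fixpoint pad (d : nat) n (x : T n) : T (d + n)%N :=
  match d with
  | 0 => x
  | d'.+1 => tens (pad d' x) one2
  end.

Definition castT m n (e : m = n) (x : T m) : T n :=
  eq_rect m (fun k => T k : Type) x n e.

(* pad x in T n up to T M (meaningful for n <= M; 0 otherwise) *)
Definition padTo n M (x : T n) : T M :=
  match (n <= M)%N as b return ((n <= M)%N = b -> T M) with
  | true => fun h => castT (subnK h) (pad (M - n)%N x)
  | false => fun _ => 0
  end erefl.

(* Phi k = phi (x) id (x) ... (x) id (k copies of id) : T k -> T k.+1 *)
Variable Phi : forall k, T k -> T k.+1.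

(* phis n = phi^(n+1) : T 0%N -> T n, with phi^(1) = id, phi^(2) = phi,
   phi^(i) = (phi (x) id^(i-2)) o phi^(i-1). *)
Fixpoint phis (n : nat) : T 0%N -> T n :=
  match n with
  | 0 => fun x => x
  | n'.+1 => fun x => Phi (phis n' x)
  end.

End JL.

From HB Require Import structures.
From mathcomp Require Import all_boot all_order all_algebra.
Import GRing.Theory.
Set Implicit Arguments.
Unset Strict Implicit.
Local Open Scope ring_scope.

(* Everything is pushed through the universal property of the tensor product:
   two (bi)linear maps agreeing on pure tensors agree, so identities need only
   be checked on pure tensors, where the tensor bracket formula reduces them to
   the previous tensor power.  In this way phi (x) id (x) ... (x) id is a
   Jordan-Lie homomorphism, padding by units x |-> x (x) 1 preserves brackets
   (since [a,1] = 0), and the padded Casimir C (x) 1 (x) ... (x) 1 is central.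
   As C^(i+1) is the image of the padded C^(i) under the homomorphism
   phi (x) id (x) ... (x) id, induction on i shows that C^(i) commutes with
   every phi^(j)(a), j >= i, in particular with phi^(j)(C); padding both to
   the last tensor power then gives [C^(i), C^(j)] = 0. *)

Section Linear.
Variable K : fieldType.
Implicit Types U V W X : lmodType K.

Lemma is_linearD U V (f : U -> V) : is_linear f -> {morph f : u v / u + v}.
Proof. by move=> lf u v; have := lf 1 u v; rewrite !scale1r. Qed.

Lemma is_linear0 U V (f : U -> V) : is_linear f -> f 0 = 0.
Proof. by move=> lf; apply: (addrI (f 0)); rewrite -is_linearD // !addr0. Qed.

Lemma is_linear_comp U V W (f : U -> V) (g : V -> W) :
  is_linear f -> is_linear g -> is_linear (fun u => g (f u)).
Proof. by move=> lf lg c u v; rewrite lf lg. Qed.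

Lemma is_linear_zero U V : is_linear (fun _ : U => 0 : V).
Proof. by move=> c u v; rewrite scaler0 addr0. Qed.

Lemma is_bilinear_comp U V W X (b : U -> X -> V) (g : V -> W) :
  is_bilinear b -> is_linear g -> is_bilinear (fun u x => g (b u x)).
Proof.
case=> bl br lg; split=> [x | u].
  exact: is_linear_comp (bl x) lg.
exact: is_linear_comp (br u) lg.
Qed.

Lemma is_bilinear_lin U V W (b : V -> V -> W) (f : U -> V) :
  is_bilinear b -> is_linear f -> is_bilinear (fun u u' => b (f u) (f u')).
Proof.
case=> bl br lf; split=> [u' | u] c v v' /=.
  by rewrite lf; exact: bl.
by rewrite lf; exact: br.
Qed.

End Linear.

Arguments is_linear_zero {K U V}.

Section TensorProduct.
Variables (K : fieldType) (X Y Z : lmodType K) (tens : X -> Y -> Z).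
Hypothesis Htens : is_tensor_product tens.

Lemma tens0l y : tens 0 y = 0.
Proof. by case: Htens => [[tl _] _]; exact: is_linear0 (tl y). Qed.

Lemma tens0r x : tens x 0 = 0.
Proof. by case: Htens => [[_ tr] _]; exact: is_linear0 (tr x). Qed.

Lemma tensor_product_ext (U : lmodType K) (g1 g2 : Z -> U) :
  is_linear g1 -> is_linear g2 ->
  (forall x y, g1 (tens x y) = g2 (tens x y)) -> forall z, g1 z = g2 z.
Proof.
move=> l1 l2 eq12 z; case: Htens => tensP univ.
have [g [_ _ uniq_g]] := univ U _ (is_bilinear_comp tensP l1).
by rewrite (uniq_g g1 l1) // (uniq_g g2 l2).
Qed.

Lemma tensor_product_ext2 (U : lmodType K) (b1 b2 : Z -> Z -> U) :
  is_bilinear b1 -> is_bilinear b2 ->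
  (forall x y x' y', b1 (tens x y) (tens x' y') = b2 (tens x y) (tens x' y')) ->
  forall z z', b1 z z' = b2 z z'.
Proof.
move=> [l1 r1] [l2 r2] eq12 z z'.
have eq_pure x y : b1 (tens x y) =1 b2 (tens x y).
  by apply: tensor_product_ext => // x' y'; exact: eq12.
by apply: (tensor_product_ext (l1 z') (l2 z')) => x y; exact: eq_pure.
Qed.

End TensorProduct.

Section UnitBracket.
Variables (K : fieldType) (A : lmodType K) (mul br : A -> A -> A) (one : A).
Hypothesis HA : JL_algebra mul br one.

Lemma JL_br_unit_r a : br a one = 0.
Proof.
case: HA => _ [_ [unit [_ [_ [_ leibniz]]]]].
have := leibniz a one one; rewrite (unit one).1 (unit _).1 (unit _).2 => h.
by apply: (addrI (br a one)); rewrite addr0 -h.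
Qed.

Lemma JL_br_unit_l a : br one a = 0.
Proof. by case: HA => _ [_ [_ [_ [anti _]]]]; rewrite anti JL_br_unit_r oppr0. Qed.

End UnitBracket.

Lemma leq_ind n (P : nat -> Prop) :
  P n -> (forall M, (n <= M)%N -> P M -> P M.+1) -> forall M, (n <= M)%N -> P M.
Proof.
move=> Pn PS; elim=> [|M IH]; first by rewrite leqn0 => /eqP <-.
rewrite leq_eqVlt => /orP[/eqP <- // | ]; rewrite ltnS => nM.
exact: PS nM (IH nM).
Qed.

Section Padding.
Variables (K : fieldType) (T : nat -> lmodType K) (A2 : lmodType K).
Variables (tens : forall n, T n -> A2 -> T n.+1) (one2 : A2).

Local Notation padTo := (padTo tens one2).

Lemma padTo_cast n M (x : T n) d (e : (d + n)%N = M) :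
  padTo M x = castT e (pad tens one2 d x).
Proof.
have nM : (n <= M)%N by rewrite -e leq_addl.
rewrite /padTo; move: (erefl (n <= M)%N); case: {2 3}(n <= M)%N => E.
  have ed : d = (M - n)%N by rewrite -e addnK.
  by subst d; congr castT; exact: eq_irrelevance.
by rewrite nM in E.
Qed.

Lemma padTo_id n (x : T n) : padTo n x = x.
Proof. exact: (padTo_cast x (erefl : (0 + n)%N = n)). Qed.

Lemma padToS n M (x : T n) : (n <= M)%N -> padTo M.+1 x = tens (padTo M x) one2.
Proof.
move=> /subnK <-; set d := (M - n)%N.
by rewrite (padTo_cast x (erefl : (d + n)%N = _))
           (padTo_cast x (erefl : (d.+1 + n)%N = _)).
Qed.

Lemma padTo_padTo n m M (x : T n) :
  (n <= m)%N -> (m <= M)%N -> padTo M (padTo m x) = padTo M x.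
Proof.
move=> nm; move: M; apply: leq_ind => [|M mM IH]; first by rewrite padTo_id.
by rewrite padToS // IH padToS // (leq_trans nm mM).
Qed.

Hypothesis HT : forall n, is_tensor_product (@tens n).

Lemma padTo0 n M : (n <= M)%N -> padTo M (0 : T n) = 0.
Proof.
move: M; apply: leq_ind => [|M nM IH]; first by rewrite padTo_id.
by rewrite padToS // IH tens0l.
Qed.

End Padding.

Section IteratedCoproduct.
Unset Implicit Arguments.
Variables (K : fieldType) (T : nat -> lmodType K) (A2 : lmodType K).
Variables (tens : forall n, T n -> A2 -> T n.+1).
Variables (mul br : forall n, T n -> T n -> T n) (mul2 br2 : A2 -> A2 -> A2).
Variable one2 : A2.
Hypothesis HT : forall n, is_tensor_product (@tens n).
Hypothesis HA2 : JL_algebra mul2 br2 one2.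
Hypothesis Hmul_bil : forall n, is_bilinear (mul n).
Hypothesis Hbr_bil : forall n, is_bilinear (br n).
Hypothesis Hmul_tens : forall n x y a b,
  mul n.+1 (tens n x a) (tens n y b) = tens n (mul n x y) (mul2 a b).
Hypothesis Hbr_tens : forall n x y a b,
  br n.+1 (tens n x a) (tens n y b) =
    tens n (br n x y) (mul2 a b) + tens n (mul n y x) (br2 a b).

Variable Phi : forall k, T k -> T k.+1.
Hypothesis HPhi_lin : forall k, is_linear (@Phi k).
Hypothesis HPhiS : forall k x a, Phi k.+1 (tens k x a) = tens k.+1 (Phi k x) a.
Hypothesis HPhi0_mul : forall x y, mul 1 (Phi 0 x) (Phi 0 y) = Phi 0 (mul 0 x y).
Hypothesis HPhi0_br : forall x y, br 1 (Phi 0 x) (Phi 0 y) = Phi 0 (br 0 x y).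
Variable C : T 0.
Hypothesis HCl : forall a, br 0 C a = 0.
Hypothesis HCr : forall a, br 0 a C = 0.
Set Implicit Arguments.

Local Notation padTo := (padTo tens one2).

Lemma padTo_br n M (x y : T n) :
  (n <= M)%N -> br M (padTo M x) (padTo M y) = padTo M (br n x y).
Proof.
have [_ [_ [unit _]]] := HA2.
move: M; apply: leq_ind => [|M nM IH]; first by rewrite !padTo_id.
rewrite !padToS // Hbr_tens IH (unit _).1 (JL_br_unit_r HA2).
by rewrite (tens0r (HT _)) addr0.
Qed.

Lemma Phi_padTo n M (x : T n) :
  (n <= M)%N -> Phi M (padTo M x) = padTo M.+1 (Phi n x).
Proof.
move: M; apply: leq_ind => [|M nM IH]; first by rewrite !padTo_id.
by rewrite padToS // HPhiS IH [RHS]padToS.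
Qed.

Lemma Phi_mul k x y : mul k.+1 (Phi k x) (Phi k y) = Phi k (mul k x y).
Proof.
elim: k x y => [|k IH]; first exact: HPhi0_mul.
apply: (tensor_product_ext2 (HT k) (is_bilinear_lin (Hmul_bil _) (HPhi_lin _))
          (is_bilinear_comp (Hmul_bil _) (HPhi_lin _))) => x a y b.
by rewrite !HPhiS !Hmul_tens IH HPhiS.
Qed.

Lemma Phi_br k x y : br k.+1 (Phi k x) (Phi k y) = Phi k (br k x y).
Proof.
elim: k x y => [|k IH]; first exact: HPhi0_br.
apply: (tensor_product_ext2 (HT k) (is_bilinear_lin (Hbr_bil _) (HPhi_lin _))
          (is_bilinear_comp (Hbr_bil _) (HPhi_lin _))) => x a y b.
by rewrite !HPhiS !Hbr_tens IH Phi_mul is_linearD // !HPhiS.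
Qed.

Lemma br_padTo_casimir_l M z : br M (padTo M C) z = 0.
Proof.
elim: M z => [|M IH] z; first by rewrite padTo_id HCl.
rewrite padToS //; move: z.
apply: (tensor_product_ext (HT M) ((Hbr_bil _).2 _) is_linear_zero) => x a.
by rewrite Hbr_tens IH (tens0l (HT _)) (JL_br_unit_l HA2) (tens0r (HT _)) addr0.
Qed.

Lemma br_padTo_casimir_r M z : br M z (padTo M C) = 0.
Proof.
elim: M z => [|M IH] z; first by rewrite padTo_id HCr.
rewrite padToS //; move: z.
apply: (tensor_product_ext (HT M) ((Hbr_bil _).1 _) is_linear_zero) => x a.
by rewrite Hbr_tens IH (tens0l (HT _)) (JL_br_unit_r HA2) (tens0r (HT _)) addr0.
Qed.

Lemma br_phis_casimir_l k M a :
  (k <= M)%N -> br M (padTo M (phis Phi k C)) (phis Phi M a) = 0.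
Proof.
elim: k M => [|k IH] [|M] // kM; try exact: br_padTo_casimir_l.
by rewrite /= -Phi_padTo // Phi_br IH // is_linear0.
Qed.

Lemma br_phis_casimir_r k M a :
  (k <= M)%N -> br M (phis Phi M a) (padTo M (phis Phi k C)) = 0.
Proof.
elim: k M => [|k IH] [|M] // kM; try exact: br_padTo_casimir_r.
by rewrite /= -Phi_padTo // Phi_br IH // is_linear0.
Qed.

End IteratedCoproduct.

Unset Implicit Arguments.

Theorem theorem1 (K : fieldType) (T : nat -> lmodType K) (A2 : lmodType K)
  (tens : forall n, T n -> A2 -> T n.+1)
  (mul br : forall n, T n -> T n -> T n) (one : forall n, T n)
  (mul2 br2 : A2 -> A2 -> A2) (one2 : A2)
  (HT : forall n, is_tensor_product (@tens n))
  (HA1 : JL_algebra (mul 0%N) (br 0%N) (one 0%N))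
  (HA2 : JL_algebra mul2 br2 one2)
  (Hkind : (JL_classical (mul 0%N) /\ JL_classical mul2) \/
           (JL_quantum (mul 0%N) (br 0%N) /\ JL_quantum mul2 br2))
  (Hmul_bil : forall n, is_bilinear (mul n))
  (Hbr_bil : forall n, is_bilinear (br n))
  (Hmul_tens : forall n x y a b,
     mul n.+1 (tens n x a) (tens n y b) = tens n (mul n x y) (mul2 a b))
  (Hbr_tens : forall n x y a b,
     br n.+1 (tens n x a) (tens n y b) =
       tens n (br n x y) (mul2 a b) + tens n (mul n y x) (br2 a b))
  (Hone_tens : forall n, one n.+1 = tens n (one n) one2)
  (C : T 0%N) (HC : forall a, br 0%N C a = 0)
  (phi : T 0%N -> T 1%N) (Hphi_lin : is_linear phi)
  (Hphi_br : forall a b, br 1%N (phi a) (phi b) = phi (br 0%N a b))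
  (Hphi_mul : forall a b, mul 1%N (phi a) (phi b) = phi (mul 0%N a b))
  (Phi : forall k, T k -> T k.+1)
  (HPhi_lin : forall k, is_linear (@Phi k))
  (HPhi0 : forall x, Phi 0%N x = phi x)
  (HPhiS : forall k x a, Phi k.+1 (tens k x a) = tens k.+1 (Phi k x) a)
  (N : nat) (HN : (2 <= N)%N) :
  (forall i j, (2 <= i <= N)%N -> (2 <= j <= N)%N ->
     br (N.-1) (padTo tens one2 N.-1 (phis Phi i.-1 C))
               (padTo tens one2 N.-1 (phis Phi j.-1 C)) = 0) /\
  (forall a i, (2 <= i <= N)%N ->
     br (N.-1) (phis Phi N.-1 a) (padTo tens one2 N.-1 (phis Phi i.-1 C)) = 0).
Proof.
have [_ [_ [_ [_ [anti1 _]]]]] := HA1.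
have HCr a : br 0%N a C = 0 by rewrite anti1 HC oppr0.
have HPhi0_mul x y : mul 1%N (Phi 0%N x) (Phi 0%N y) = Phi 0%N (mul 0%N x y).
  by rewrite !HPhi0 Hphi_mul.
have HPhi0_br x y : br 1%N (Phi 0%N x) (Phi 0%N y) = Phi 0%N (br 0%N x y).
  by rewrite !HPhi0 Hphi_br.
have casimir_l := br_phis_casimir_l HT HA2 Hmul_bil Hbr_bil Hmul_tens Hbr_tens
  HPhi_lin HPhiS HPhi0_mul HPhi0_br HC.
have casimir_r := br_phis_casimir_r HT HA2 Hmul_bil Hbr_bil Hmul_tens Hbr_tens
  HPhi_lin HPhiS HPhi0_mul HPhi0_br HCr.
have le_pred i : (i <= N)%N -> (i.-1 <= N.-1)%N by rewrite -!subn1 => /leq_sub2r.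
split=> [i j /andP[_ /le_pred iN] /andP[_ /le_pred jN] | a i /andP[_ /le_pred iN]].
  have [ij | /ltnW ji] := leqP i.-1 j.-1.
    rewrite -(padTo_padTo tens one2 _ ij jN) (padTo_br HT HA2 Hbr_tens) //.
    by rewrite casimir_l // (padTo0 one2 HT).
  rewrite -(padTo_padTo tens one2 _ ji iN) (padTo_br HT HA2 Hbr_tens) //.
  by rewrite casimir_r // (padTo0 one2 HT).
exact: casimir_r.
Qed.
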